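(* Let $n\ge 1$ and let $O:\{0,1\}^n\to\{-,0,+\}^n$ be a partial orientation of the $n$-cube that is partially Szabó–Welzl. Then $O$ can be extended to a unique sink orientation, i.e., there exists a unique sink orientation $O':\{0,1\}^n\to\{-,+\}^n$ with $O'(v)_i=O(v)_i$ for all $v\in\{0,1\}^n$ and $i\in[n]$ with $O(v)_i\neq 0$.
   Context: The $n$-cube $Q_n$ has vertex set $\{0,1\}^n$, two vertices being adjacent iff they differ in exactly one coordinate. A face of $Q_n$ is a set of the form $\{w\in\{0,1\}^n : w_j=u_j \text{ for all } j\notin I\}$ for some $u\in\{0,1\}^n$ and $I\subseteq[n]$; it spans the dimensions in $I$. A partial orientation is a function $O:\{0,1\}^n\to\{-,0,+\}^n$, where $O(v)_i=+$ means the half-edge of $v$ in dimension $i$ is outgoing, $O(v)_i=-$ incoming, and $O(v)_i=0$ unoriented (degenerate). An orientation is a partial orientation with no zero entries. A unique sink orientation (USO) is an orientation such that every non-empty face $f$ contains exactly one vertex $v$ with $O(v)_i=-$ for all dimensions $i$ spanned by $f$. A partial orientation $O$ is partially Szabó–Welzl if for any two distinct vertices $v,w$, either (1) $O(v)_i=O(w)_i=0$ for all $i$ with $v_i\neq w_i$, or (2) there exists $i$ with $v_i\neq w_i$ and $\{O(v)_i,O(w)_i\}=\{-,+\}$. *)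

From HB Require Import structures.
From mathcomp Require Import all_boot.
Set Implicit Arguments. Unset Strict Implicit. Unset Printing Implicit Defensive.

(* Signs of half-edges: Minus = incoming, Zero = unoriented, Plus = outgoing. *)
Inductive sign := Minus | Zero | Plus.
Definition sign_eqb (a b : sign) : bool :=
  match a, b with
  | Minus, Minus | Zero, Zero | Plus, Plus => true | _, _ => false end.
Lemma sign_eqP : Equality.axiom sign_eqb.
Proof. by case; case; constructor. Qed.
HB.instance Definition _ := hasDecEq.Build sign sign_eqP.

Definition vertex (n : nat) := {ffun 'I_n -> bool}.

Definition porient (n : nat) := vertex n -> 'I_n -> sign.

Definition face n (u : vertex n) (I : {set 'I_n}) : {set vertex n} :=
  [set w : vertex n | [forall j, (j \notin I) ==> (w j == u j)]].

Definition is_orientation n (O : porient n) : Prop :=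
  forall v i, O v i != Zero.

Definition sink_in n (O : porient n) (I : {set 'I_n}) (v : vertex n) : bool :=
  [forall i, (i \in I) ==> (O v i == Minus)].

Definition is_USO n (O : porient n) : Prop :=
  is_orientation O /\
  forall (u : vertex n) (I : {set 'I_n}),
    #|[set v in face u I | sink_in O I v]| = 1.

Definition partially_SW n (O : porient n) : Prop :=
  forall v w : vertex n, v != w ->
    (forall i, v i != w i -> O v i = Zero /\ O w i = Zero) \/
    (exists i, v i != w i /\
       ((O v i = Minus /\ O w i = Plus) \/ (O v i = Plus /\ O w i = Minus))).

Definition extends n (O O' : porient n) : Prop :=
  forall v i, O v i != Zero -> O' v i = O v i.

From mathcomp Require Import all_boot.
Set Implicit Arguments. Unset Strict Implicit.

(* Fill every unoriented half-edge with the combed direction: outgoing iff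
   the coordinate is 1.  Two distinct vertices either already carry opposite
   signs on some differing coordinate, or are unoriented on all of them, in
   which case the combing makes them opposite.  So the filled orientation is
   Szabo-Welzl, and then on each face spanning I the outmap
   v |-> {i in I | v is outgoing in i} is injective; as the face has
   2^|I| vertices it is a bijection onto the subsets of I, and exactly one
   vertex has empty outmap, i.e. is the sink. *)

Section SzaboWelzl.
Variable n : nat.
Implicit Types (O : porient n) (u v w : vertex n) (I : {set 'I_n}).

Definition SzaboWelzl O : Prop :=
  forall v w, v != w -> exists i, v i != w i /\ O v i != O w i.

Definition outmap O I v : {set 'I_n} := [set i in I | O v i == Plus].

Lemma vertex_neq_coord v w : v != w -> exists i, v i != w i.
Proof.
move=> vw; apply/existsP; apply: contraR vw => /existsPn eq_vw.
by apply/eqP/ffunP => i; move/negPn/eqP: (eq_vw i).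
Qed.

Lemma face_coord u I v j : v \in face u I -> j \notin I -> v j = u j.
Proof. by rewrite inE => /forallP/(_ j)/implyP H /H/eqP. Qed.

Lemma card_face u I : #|face u I| = #|powerset I|.
Proof.
pose flips v := [set i in I | v i != u i].
have flips_inj : {in face u I &, injective flips}.
  move=> v w vF wF /setP eq_vw; apply/ffunP => j.
  case jI: (j \in I); last by rewrite (face_coord vF (negbT jI)) (face_coord wF (negbT jI)).
  by move: (eq_vw j); rewrite !inE jI /=; case: (v j); case: (w j); case: (u j).
rewrite -(card_in_imset flips_inj); apply: eq_card => S; rewrite inE.
apply/imsetP/idP => [[v _ ->]|SI].
  by apply/subsetP => i; rewrite inE => /andP[].
exists [ffun j => if j \in S then ~~ u j else u j].
  rewrite inE; apply/forallP => j; apply/implyP => jI; rewrite ffunE.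
  by case jS: (j \in S) => //; rewrite (subsetP SI _ jS) in jI.
apply/setP => i; rewrite inE ffunE.
case iS: (i \in S); first by rewrite (subsetP SI _ iS); case: (u i).
by rewrite eqxx andbF.
Qed.

Section Orientation.
Variable O : porient n.
Hypothesis O_orient : is_orientation O.

Lemma sink_inE I v : sink_in O I v = (outmap O I v == set0).
Proof.
apply/forallP/eqP => [sink_v|/setP out_v i].
  by apply/setP => i; rewrite !inE; case: (i \in I) (sink_v i) => //= /eqP ->.
by apply/implyP => iI; move: (out_v i) (O_orient v i); rewrite !inE iI /=; case: (O v i).
Qed.

Hypothesis O_SW : SzaboWelzl O.

Lemma outmap_inj u I : {in face u I &, injective (outmap O I)}.
Proof.
move=> v w vF wF /setP eq_out; apply/eqP/negPn/negP => /O_SW [i [vw_i Ovw_i]].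
have iI : i \in I.
  by apply: contraR vw_i => iI; rewrite (face_coord vF iI) (face_coord wF iI) eqxx.
move: (eq_out i) Ovw_i (O_orient v i) (O_orient w i); rewrite !inE iI /=.
by case: (O v i); case: (O w i).
Qed.

Lemma outmap_face u I : outmap O I @: face u I = powerset I.
Proof.
apply/eqP; rewrite eqEcard (card_in_imset (@outmap_inj u I)) card_face leqnn andbT.
by apply/subsetP => S /imsetP [v _ ->]; rewrite inE; apply/subsetP => i; rewrite inE => /andP[].
Qed.

Lemma is_USO_SzaboWelzl : is_USO O.
Proof.
split=> // u I.
have /imsetP [v0 v0F out_v0] : set0 \in outmap O I @: face u I.
  by rewrite outmap_face inE sub0set.
suff -> : [set v in face u I | sink_in O I v] = [set v0] by rewrite cards1.
apply/setP => v; rewrite in_set1 in_set sink_inE.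
apply/andP/eqP => [[vF /eqP out_v]|->]; last by rewrite v0F -out_v0.
exact: (outmap_inj vF v0F (etrans out_v out_v0)).
Qed.

End Orientation.

Definition comb_fill O : porient n := fun v i =>
  match O v i with Zero => if v i then Plus else Minus | s => s end.

Lemma comb_fill_orientation O : is_orientation (comb_fill O).
Proof. by move=> v i; rewrite /comb_fill; case: (O v i) => //; case: (v i). Qed.

Lemma comb_fill_extends O : extends O (comb_fill O).
Proof. by move=> v i; rewrite /comb_fill; case: (O v i). Qed.

Lemma comb_fill_SzaboWelzl O : partially_SW O -> SzaboWelzl (comb_fill O).
Proof.
move=> O_pSW v w vw; case: (O_pSW v w vw) => [unoriented|[i [vw_i opposite]]].
  have [i vw_i] := vertex_neq_coord vw; exists i; split=> //.
  rewrite /comb_fill; have [-> ->] := unoriented i vw_i.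
  by case: (v i) (w i) vw_i => [] [].
by exists i; split=> //; rewrite /comb_fill; case: opposite => [[-> ->]|[-> ->]].
Qed.

End SzaboWelzl.

Theorem mainTheorem1 (n : nat) (O : porient n) :
  1 <= n -> partially_SW O ->
  exists O' : porient n, is_USO O' /\ extends O O'.
Proof.
move=> _ O_pSW; exists (comb_fill O); split; last exact: comb_fill_extends.
apply: is_USO_SzaboWelzl; first exact: comb_fill_orientation.
exact: comb_fill_SzaboWelzl.
Qed.
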